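(* Let $p$ be a prime, $\mathbb{C}_p$ the field of complex $p$-adic numbers with norm $|\cdot|_p$, $a,b,c\in\mathbb{C}_p$ with $b\neq0$, $c\neq ab$, $f(x)=\frac{x+a}{bx+c}$ for $x\neq -c/b$. Fix a square root $\sqrt{(c-1)^2+4ab}$ and let $x_{1}=\frac{1-c+\sqrt{(c-1)^2+4ab}}{2b}$, $x_2=\frac{1-c-\sqrt{(c-1)^2+4ab}}{2b}$. Put $$\delta_1=\left|\frac{(bx_1+c)^2}{c-ab}\right|_p-1,\qquad \delta_2=\left|\frac{bx_1+c}{b}\right|_p-1.$$ If $x\in\mathbb{C}_p$ satisfies $|x-x_2|_p>\frac{1+\delta_2}{1+\delta_1}$, then $f(x)\in S_{1+\delta_2}(x_2)$.
   Context: $S_r(x_2)=\{y\in\mathbb{C}_p:|y-x_2|_p=r\}$. *)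

From HB Require Import structures.
From mathcomp Require Import all_boot all_order all_algebra.
From mathcomp Require Import reals.
Set Implicit Arguments. Unset Strict Implicit. Unset Printing Implicit Defensive.
Import Order.TTheory GRing.Theory Num.Theory.
Local Open Scope ring_scope.

(* An abstract model of (C_p, |.|_p): an algebraically closed field K with a
   real-valued absolute value that is non-archimedean, complete, and restricts
   to the p-adic absolute value (|p|_p = 1/p).  C_p is such a model. *)
Definition is_Cp_norm (R : realType) (K : closedFieldType) (p : nat)
  (nrm : K -> R) : Prop :=
  [/\ forall x, nrm x = 0 <-> x = 0,
      forall x, 0 <= nrm x,
      forall x y, nrm (x * y) = nrm x * nrm y,
      forall x y, nrm (x + y) <= Num.max (nrm x) (nrm y) &
      nrm (p%:R) = (p%:R)^-1] /\
      (
      forall u : nat -> K,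
        (forall e : R, 0 < e -> exists N, forall m n, (N <= m)%N -> (N <= n)%N ->
           nrm (u m - u n) < e) ->
        exists l, forall e : R, 0 < e -> exists N, forall n, (N <= n)%N ->
           nrm (u n - l) < e).

Definition sphere (R : realType) (K : closedFieldType) (nrm : K -> R)
  (r : R) (x0 : K) (y : K) : Prop := nrm (y - x0) = r.

Definition mobius (K : closedFieldType) (a b c x : K) : K := (x + a) / (b * x + c).

(** The fixed points x1, x2 of f are the roots of b x^2 + (c - 1) x - a, and
    with A = b x1 + c, B = b x2 + c Vieta's formulas give A B = c - a b and
    f(x) - x2 = A (x - x2) / (b x + c), where b x + c = b (x - x2) + B.  The
    hypothesis says |b (x - x2)| > |B|, so by the ultrametric inequality
    |b x + c| = |b (x - x2)|, whence |f(x) - x2| = |A| / |b| = 1 + delta2. *)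

From HB Require Import structures.
From mathcomp Require Import all_boot all_order all_algebra.
From mathcomp Require Import reals.
From mathcomp Require Import ring zify.
Set Implicit Arguments. Unset Strict Implicit. Unset Printing Implicit Defensive.
Import Order.TTheory GRing.Theory Num.Theory.
Local Open Scope ring_scope.

Definition nonarch_absv (R : numDomainType) (K : fieldType) (nrm : K -> R) :=
  [/\ forall x, nrm x = 0 <-> x = 0,
      forall x, 0 <= nrm x,
      forall x y, nrm (x * y) = nrm x * nrm y &
      forall x y, nrm (x + y) <= Num.max (nrm x) (nrm y)].

Section NonArchimedeanAbsoluteValue.
Variables (R : realFieldType) (K : fieldType) (nrm : K -> R).
Hypothesis nrmP : nonarch_absv nrm.

Lemma absv_eq0 x : (nrm x == 0) = (x == 0).
Proof. by case: nrmP => N0 _ _ _; apply/eqP/eqP => /N0. Qed.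

Lemma absv0 : nrm 0 = 0.
Proof. by apply/eqP; rewrite absv_eq0. Qed.

Lemma absv_ge0 x : 0 <= nrm x.
Proof. by case: nrmP. Qed.

Lemma absv_gt0 x : (0 < nrm x) = (x != 0).
Proof. by rewrite lt_def absv_eq0 absv_ge0 andbT. Qed.

Lemma absvM x y : nrm (x * y) = nrm x * nrm y.
Proof. by case: nrmP. Qed.

Lemma absv1 : nrm 1 = 1.
Proof.
have N1_neq0 : nrm 1 != 0 by rewrite absv_eq0 oner_neq0.
by apply: (mulfI N1_neq0); rewrite -absvM !mulr1.
Qed.

Lemma absvV x : nrm x^-1 = (nrm x)^-1.
Proof.
have [->|x_neq0] := eqVneq x 0; first by rewrite invr0 absv0 invr0.
have Nx_neq0 : nrm x != 0 by rewrite absv_eq0.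
by apply: (mulfI Nx_neq0); rewrite -absvM !mulfV // absv1.
Qed.

Lemma absvf_div x y : nrm (x / y) = nrm x / nrm y.
Proof. by rewrite absvM absvV. Qed.

Lemma absvN x : nrm (- x) = nrm x.
Proof.
have sqr_Nm1 : nrm (-1) ^+ 2 = 1 by rewrite expr2 -absvM mulrNN mulr1 absv1.
have Nm1 : nrm (-1) = 1.
  by apply/eqP; rewrite -(eqrXn2 (isT : (0 < 2)%N)) ?sqr_Nm1 ?expr1n ?absv_ge0.
by rewrite -mulN1r absvM Nm1 mul1r.
Qed.

Lemma absvD_eql x y : nrm y < nrm x -> nrm (x + y) = nrm x.
Proof.
case: nrmP => _ _ _ ultra lt_yx; apply/eqP; rewrite eq_le; apply/andP; split.
  by apply: le_trans (ultra x y) _; rewrite ge_max lexx ltW.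
have := ultra (x + y) (- y); rewrite addrK absvN le_max => /orP[] // le_xy.
by move: le_xy; rewrite leNgt lt_yx.
Qed.

Lemma two_neq0_of_absv_natr (p : nat) :
  (1 < p)%N -> nrm p%:R = p%:R^-1 -> (2 : K) != 0.
Proof.
move=> p_gt1 Np; apply/eqP => two_eq0; move: Np.
rewrite -(odd_double_half p) natrD -muln2 natrM two_eq0 mulr0 addr0.
case: (odd p); rewrite ?absv1 ?absv0 => /eqP;
  by rewrite eq_sym ?invr_eq0 ?invr_eq1 ?pnatr_eq0 ?pnatr_eq1; lia.
Qed.

End NonArchimedeanAbsoluteValue.

Section MobiusFixedPoints.
Variables (K : fieldType) (a b c : K).

Lemma mobius_fixpoints_sum (s : K) : (2 : K) != 0 -> b != 0 ->
  b * ((1 - c + s) / (2 * b) + (1 - c - s) / (2 * b)) = 1 - c.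
Proof. by move=> two_neq0 b_neq0; field; rewrite two_neq0 b_neq0. Qed.

Lemma mobius_fixpoints_prod (s : K) : (2 : K) != 0 -> b != 0 ->
  s ^+ 2 = (c - 1) ^+ 2 + 4 * a * b ->
  b * ((1 - c + s) / (2 * b)) * ((1 - c - s) / (2 * b)) = - a.
Proof.
move=> two_neq0 b_neq0 s2.
have four_neq0 : (4 : K) != 0 by rewrite (_ : 4 = 2 * 2) ?mulf_neq0 //; ring.
have -> : b * ((1 - c + s) / (2 * b)) * ((1 - c - s) / (2 * b)) =
    ((1 - c) ^+ 2 - s ^+ 2) / (4 * b).
  by field; rewrite two_neq0 four_neq0 b_neq0.
by rewrite s2; field; rewrite four_neq0 b_neq0.
Qed.

Variables (x1 x2 : K).
Hypotheses (vieta_sum : b * (x1 + x2) = 1 - c) (vieta_prod : b * x1 * x2 = - a).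

Lemma fixpoint_denom_mul : (b * x1 + c) * (b * x2 + c) = c - a * b.
Proof.
apply/eqP; rewrite -subr_eq0.
have -> : (b * x1 + c) * (b * x2 + c) - (c - a * b) =
    b * (b * x1 * x2 + a) + c * (b * (x1 + x2) - (1 - c)) by ring.
by rewrite vieta_sum vieta_prod addNr subrr !mulr0 addr0.
Qed.

Lemma mobius_sub_fixpoint x : b * x + c != 0 ->
  (x + a) / (b * x + c) - x2 = (b * x1 + c) * (x - x2) / (b * x + c).
Proof.
move=> den_neq0.
have num : x + a - x2 * (b * x + c) = (b * x1 + c) * (x - x2).
  apply/eqP; rewrite -subr_eq0.
  have -> : x + a - x2 * (b * x + c) - (b * x1 + c) * (x - x2) =
      x * (1 - c - b * (x1 + x2)) + (a + b * x1 * x2) by ring.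
  by rewrite vieta_sum vieta_prod subrr addrN mulr0 addr0.
by rewrite -num; field.
Qed.

Variables (R : realFieldType) (nrm : K -> R).
Hypothesis nrmP : nonarch_absv nrm.

Lemma absv_mobius_sub_fixpoint_far x :
  nrm (b * x2 + c) < nrm (b * (x - x2)) ->
  b * x + c != 0 /\ nrm ((x + a) / (b * x + c) - x2) = nrm (b * x1 + c) / nrm b.
Proof.
move=> far.
have den : nrm (b * x + c) = nrm (b * (x - x2)).
  have -> : b * x + c = b * (x - x2) + (b * x2 + c) by ring.
  exact: absvD_eql.
have bu_neq0 : b * (x - x2) != 0.
  by rewrite -(absv_gt0 nrmP) (le_lt_trans (absv_ge0 nrmP _) far).
have [b_neq0 u_neq0] : b != 0 /\ x - x2 != 0 by apply/norP; rewrite -mulf_eq0.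
have den_neq0 : b * x + c != 0 by rewrite -(absv_eq0 nrmP) den absv_eq0.
split=> //; rewrite mobius_sub_fixpoint // (absvf_div nrmP) !(absvM nrmP) den.
by rewrite (absvM nrmP) -mulf_div divff ?mulr1 // (absv_eq0 nrmP).
Qed.

End MobiusFixedPoints.

Theorem lemma3p8 (R : realType) (K : closedFieldType) (p : nat)
  (nrm : K -> R) (a b c s x : K) :
  prime p -> is_Cp_norm p nrm ->
  b != 0 -> c != a * b ->
  s ^+ 2 = (c - 1) ^+ 2 + 4 * a * b ->
  let x1 := (1 - c + s) / (2 * b) in
  let x2 := (1 - c - s) / (2 * b) in
  let delta1 := nrm ((b * x1 + c) ^+ 2 / (c - a * b)) - 1 in
  let delta2 := nrm ((b * x1 + c) / b) - 1 in
  nrm (x - x2) > (1 + delta2) / (1 + delta1) ->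
  x != - c / b /\ sphere nrm (1 + delta2) x2 (mobius a b c x).
Proof.
move=> p_prime [[N0 N_ge0 NM NU Np] _] b_neq0 c_neq_ab s2 x1 x2 d1 d2 far.
have nrmP : nonarch_absv nrm by split.
have two_neq0 := two_neq0_of_absv_natr nrmP (prime_gt1 p_prime) Np.
have sum : b * (x1 + x2) = 1 - c := mobius_fixpoints_sum c s two_neq0 b_neq0.
have prod : b * x1 * x2 = - a := mobius_fixpoints_prod two_neq0 b_neq0 s2.
have AB := fixpoint_denom_mul sum prod.
have [A_neq0 B_neq0] : b * x1 + c != 0 /\ b * x2 + c != 0.
  by apply/norP; rewrite -mulf_eq0 AB subr_eq0.
have e1 : 1 + d1 = nrm (b * x1 + c) / nrm (b * x2 + c).
  rewrite /d1 addrC subrK -AB expr2 (absvf_div nrmP) !(absvM nrmP) -mulf_div.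
  by rewrite divff ?mul1r // (absv_eq0 nrmP).
have e2 : 1 + d2 = nrm (b * x1 + c) / nrm b.
  by rewrite /d2 addrC subrK (absvf_div nrmP).
have {}far : nrm (b * x2 + c) < nrm (b * (x - x2)).
  have NA_neq0 : nrm (b * x1 + c) != 0 by rewrite (absv_eq0 nrmP).
  rewrite (absvM nrmP); move: far.
  rewrite e1 e2 invf_div mulrC mulrA mulfVK //.
  by rewrite ltr_pdivrMr ?(absv_gt0 nrmP) // [_ * nrm b]mulrC.
have [den_neq0 dist] := absv_mobius_sub_fixpoint_far sum prod nrmP far.
split; last by rewrite /sphere /mobius dist e2.
apply: contra den_neq0 => /eqP ->.
by rewrite mulrCA mulfV // mulr1 addNr.
Qed.
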